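(* For every Eulerian poset $P$ of rank $n+1$, the polynomial $(1+q)^{\lceil n/2\rceil}$ divides $\Theta(\Psi(P))$ in $\mathbb{Z}[q]$.
   Context: A graded poset $P$ with minimum $\hat0$ and maximum $\hat1$ is Eulerian if every interval $[x,y]$ with $x<y$ has as many elements of even rank as of odd rank. For $P$ of rank $n+1$ with rank function $\rho$, the $\mathbf{a}\mathbf{b}$-index is $\Psi(P)=\sum_{S\subseteq\{1,\dots,n\}} f_S\, v_S$, where for $S=\{s_1<\cdots<s_k\}$, $f_S$ is the number of chains $\hat0<x_1<\cdots<x_k<\hat1$ with $\rho(x_i)=s_i$, and $v_S=v_1\cdots v_n$ with $v_i=\mathbf{b}$ if $i\in S$, $v_i=\mathbf{a}-\mathbf{b}$ otherwise ($\mathbf{a},\mathbf{b}$ non-commuting variables). The Major MacMahon map $\Theta:\mathbb{Z}\langle\mathbf{a},\mathbf{b}\rangle\to\mathbb{Z}[q]$ is linear with $\Theta(u_1\cdots u_n)=\prod_{i:\,u_i=\mathbf{b}}q^i$ on monomials. *)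

From HB Require Import structures.
From mathcomp Require Import all_boot all_order all_algebra.
Set Implicit Arguments. Unset Strict Implicit. Unset Printing Implicit Defensive.
Import Order.TTheory GRing.Theory.

Definition covers d (T : finPOrderType d) (x y : T) : bool :=
  (x < y)%O && [forall t : T, ~~ ((x < t)%O && (t < y)%O)].

Definition graded_with d (T : finPOrderType d) (z o : T) (rho : T -> nat) : Prop :=
  [/\ forall x : T, (z <= x)%O,
      forall x : T, (x <= o)%O,
      rho z = 0%N &
      forall x y : T, covers x y -> rho y = (rho x).+1].

Definition eulerian d (T : finPOrderType d) (rho : T -> nat) : Prop :=
  forall x y : T, (x < y)%O ->
    #|[set t : T | (x <= t)%O && (t <= y)%O && ~~ odd (rho t)]| =
    #|[set t : T | (x <= t)%O && (t <= y)%O && odd (rho t)]|.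

Definition is_chain d (T : finPOrderType d) (C : {set T}) : bool :=
  [forall x in C, forall y in C, (x <= y)%O || (y <= x)%O].

(* Positions 1..n are encoded by i : 'I_n standing for i.+1.
   flag_f S = number of chains z < x_1 < ... < x_k < o whose rank set is S. *)
Definition flag_f d (T : finPOrderType d) (z o : T) (rho : T -> nat) (n : nat)
  (S : {set 'I_n}) : nat :=
  #|[set C : {set T} | [&& is_chain C,
       [forall x in C, (z < x)%O && (x < o)%O],
       [forall x in C, exists i in S, rho x == (val i).+1] &
       [forall i in S, exists x in C, rho x == (val i).+1]]]|.

(* Homogeneous degree-n elements of Z<a,b> are represented by their coefficient
   function on words of length n; a word is an n.-tuple bool, true = b, false = a. *)
(* Coefficient of the word w in v_S = v_1 ... v_n, v_i = b if i in S, a - b otherwise. *)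
Definition vS_coef (n : nat) (S : {set 'I_n}) (w : n.-tuple bool) : int :=
  \prod_(i < n) (if i \in S then (if tnth w i then 1 else 0)
                 else (if tnth w i then -1 else 1))%R.

Definition ab_index d (T : finPOrderType d) (z o : T) (rho : T -> nat) (n : nat)
  : {ffun n.-tuple bool -> int} :=
  [ffun w => (\sum_(S : {set 'I_n}) (flag_f z o rho S)%:Z * vS_coef S w)%R].

Definition Theta (n : nat) (F : {ffun n.-tuple bool -> int}) : {poly int} :=
  (\sum_(w : n.-tuple bool) F w *: \prod_(i < n | tnth w i) 'X^((val i).+1))%R.

From HB Require Import structures.
From mathcomp Require Import all_boot all_order all_algebra.
From mathcomp Require Import ring zify.
From Stdlib Require Import Classical.
Set Implicit Arguments. Unset Strict Implicit. Unset Printing Implicit Defensive.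
Import Order.TTheory GRing.Theory Num.Theory.

(* Expanding Psi(P) over chains gives
     Theta(Psi(P)) = sum_C prod_{i in S(C)} q^i prod_{i notin S(C)} (1 - q^i),
   S(C) the rank set of the chain C.  Writing each q^i as
   ((1 + q^i) - (1 - q^i)) / 2 expresses this in the basis
     P_J = prod_{i in J} (1 + q^i) prod_{i notin J} (1 - q^i).
   If all gaps between consecutive marks (0, the positions in J, and n + 1) are
   odd, P_J is divisible by (1 + q)^ceil(n/2): a gap of length 2m + 1 holds 2m
   consecutive factors 1 - q^k, contributing (1 + q)^m, and each odd mark k
   contributes 1 + q^k.
   If some gap (a, b) is even, the coefficient of P_J factors through sums
   sum_K (-1/2)^|K| over the chains K of intervals (u, v) with rho v - rho u = b - a,
   and in an Eulerian poset such a sum equals (-1)^(rho u + rho v + 1) times itself,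
   hence vanishes. *)

Section OneAddXDivisibility.
Variable R : idomainType.
Local Open Scope ring_scope.

Lemma dvdp_1addX (p : {poly R}) : (1 + 'X %| p) = root p (-1).
Proof. by rewrite -dvdp_XsubCl polyCN opprK addrC. Qed.

Lemma dvdp_1addX_1subXn (k : nat) : ~~ odd k -> (1 + 'X : {poly R}) %| 1 - 'X^k.
Proof.
by move=> ev_k; rewrite dvdp_1addX /root !hornerE -signr_odd (negbTE ev_k) subrr.
Qed.

Lemma dvdp_1addX_1addXn (k : nat) : odd k -> (1 + 'X : {poly R}) %| 1 + 'X^k.
Proof. by move=> odd_k; rewrite dvdp_1addX /root !hornerE -signr_odd odd_k subrr. Qed.

(* Among any two consecutive exponents one is even. *)
Lemma dvdp_prod_1subXn (a m : nat) :
  (1 + 'X : {poly R}) ^+ m %| \prod_(a.+1 <= k < a.+1 + m.*2) (1 - 'X^k).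
Proof.
elim: m a => [|m IHm] a; first by rewrite expr0 dvd1p.
rewrite doubleS !addnS big_ltn; last lia.
rewrite big_ltn; last lia.
rewrite mulrA exprS (dvdp_mul _ (IHm a.+2)) //.
by case: (boolP (odd a)) => odd_a;
  [apply/dvdp_mulr/dvdp_1addX_1subXn | apply/dvdp_mull/dvdp_1addX_1subXn];
  rewrite //= odd_a.
Qed.

Definition odd_gaps (mark : pred nat) (N : nat) : Prop :=
  forall a b, (a < b <= N)%N -> mark a -> mark b ->
    (forall k, (a < k < b)%N -> ~~ mark k) -> odd (b - a).

Definition marked_prod (mark : pred nat) (a b : nat) : {poly R} :=
  \prod_(a.+1 <= k < b) (if mark k then 1 + 'X^k else 1 - 'X^k).

Lemma dvdp_marked_prod (mark : pred nat) (N a b : nat) :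
  odd_gaps mark N -> (a < b <= N)%N -> mark a -> mark b ->
  (1 + 'X) ^+ (b./2 - a.+1./2) %| marked_prod mark a b.
Proof.
move=> gapsP; have [s] := ubnP (b - a); elim: s => // s IHs in a *.
rewrite ltnS => le_ba_s /andP [lt_ab le_bN] mark_a mark_b.
have has_next : exists k, (a < k)%N && mark k by exists b; rewrite lt_ab.
case: (ex_minnP has_next) => a' /andP [lt_aa' mark_a'] min_a'.
have le_a'b : (a' <= b)%N by apply: min_a'; rewrite lt_ab.
have no_mark k : (a < k < a')%N -> ~~ mark k.
  by case/andP=> lt_ak lt_ka'; apply/negP => mark_k; move: (min_a' k);
    rewrite lt_ak mark_k leqNgt lt_ka' => /(_ isT).
have odd_gap : odd (a' - a).
  by apply: gapsP => //; rewrite lt_aa' (leq_trans le_a'b le_bN).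
have [m def_a'] : exists m, a' = (a.+1 + m.*2)%N.
  by exists (a' - a)./2; have := odd_double_half (a' - a); rewrite odd_gap; lia.
have gap_dvd : (1 + 'X : {poly R}) ^+ m %|
               \prod_(a.+1 <= k < a') (if mark k then 1 + 'X^k else 1 - 'X^k).
  rewrite (eq_big_nat _ _ (F2 := fun k => 1 - 'X^k)) => [|k /no_mark /negbTE -> //].
  by rewrite def_a' dvdp_prod_1subXn.
rewrite /marked_prod (big_cat_nat lt_aa' le_a'b) /=.
case: (ltnP a' b) => [lt_a'b|le_ba']; last first.
  have eq_a'b : a' = b by apply/eqP; rewrite eqn_leq le_a'b le_ba'.
  rewrite -eq_a'b [X in _ * X]big_geq // mulr1 (dvdp_trans _ gap_dvd) // dvdp_exp2l //.
  by rewrite def_a' -!divn2; lia.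
rewrite [X in _ * X]big_ltn //= mark_a' mulrCA.
have mark_dvd : (1 + 'X : {poly R}) ^+ (odd a') %| 1 + 'X^a'.
  by case: (boolP (odd a')) => [/dvdp_1addX_1addXn|_]; rewrite ?expr1 ?expr0 ?dvd1p.
have rest_dvd : (1 + 'X : {poly R}) ^+ (b./2 - a'.+1./2) %| marked_prod mark a' b.
  by apply: IHs; rewrite ?lt_a'b //; lia.
apply: dvdp_trans (dvdp_mul mark_dvd (dvdp_mul gap_dvd rest_dvd)).
by rewrite -!exprD dvdp_exp2l // def_a' -!divn2; move: lt_a'b; rewrite def_a'; lia.
Qed.

End OneAddXDivisibility.

Arguments marked_prod {R} mark a b.

Lemma not_odd_gaps (mark : pred nat) (N : nat) : ~ odd_gaps mark N ->
  exists a b, [/\ (a < b <= N)%N, mark a, mark b,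
                  forall k, (a < k < b)%N -> ~~ mark k & ~~ odd (b - a)].
Proof.
move=> not_gaps; apply: NNPP => no_even_gap; apply: not_gaps => a b abN mark_a mark_b gap.
by apply/negPn/negP => even_ba; apply: no_even_gap; exists a, b.
Qed.

Section MacMahon.
Local Open Scope ring_scope.

Lemma dvdp_intr_monic (d p : {poly int}) : d \is monic ->
  map_poly intr d %| map_poly (intr : int -> rat) p -> exists q, p = q * d.
Proof.
move=> monic_d; have inj_f := map_inj_poly (@intr_inj rat) (rmorph0 _).
rewrite dvdpE /Pdiv.Ring.rdvdp (Pdiv.RingMonic.rdivp_eq monic_d p) rmorphD rmorphM /=.
have monic_fd : map_poly (intr : int -> rat) d \is monic.
  by rewrite monicE lead_coef_map_inj ?(monicP monic_d) //; exact: intr_inj.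
rewrite Pdiv.RingMonic.rmodp_addl_mul_small //; last first.
  rewrite !size_map_inj_poly ?Pdiv.Ring.ltn_rmodp ?monic_neq0 //; exact: intr_inj.
by rewrite -(rmorph0 (map_poly intr)) => /eqP /inj_f ->; rewrite addr0; eexists.
Qed.

Lemma sum_tuple_prod (R : comPzSemiRingType) (n : nat) (g : 'I_n -> bool -> R) :
  \sum_(w : n.-tuple bool) \prod_(i < n) g i (tnth w i) =
  \prod_(i < n) (g i true + g i false).
Proof.
rewrite bigA_distr (reindex (fun J : {set 'I_n} => [tuple i \in J | i < n])).
  by apply: eq_bigr => J _; apply: eq_bigr => i _; rewrite tnth_mktuple; case: (i \in J).
exists (fun w : n.-tuple bool => [set i | tnth w i]) => [J _ | w _].
  by apply/setP => i; rewrite inE tnth_mktuple.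
by apply: eq_from_tnth => i; rewrite tnth_mktuple inE.
Qed.

Definition Theta_vS (n : nat) (S : {set 'I_n}) : {poly int} :=
  \prod_(i < n) (if i \in S then 'X^((val i).+1) else 1 - 'X^((val i).+1)).

Lemma ThetaE_vS (n : nat) (S : {set 'I_n}) :
  \sum_(w : n.-tuple bool) vS_coef S w *: \prod_(i < n | tnth w i) 'X^((val i).+1)
  = Theta_vS S.
Proof.
pose g (i : 'I_n) (b : bool) : {poly int} :=
  (if i \in S then (if b then 1 else 0) else (if b then -1 else 1))%:P *
  (if b then 'X^((val i).+1) else 1).
transitivity (\sum_(w : n.-tuple bool) \prod_(i < n) g i (tnth w i)).
  apply: eq_bigr => w _; rewrite big_split /= -mul_polyC rmorph_prod.
  by congr (_ * _); rewrite big_mkcond.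
rewrite sum_tuple_prod; apply: eq_bigr => i _; rewrite /g.
by case: (i \in S); rewrite ?polyCN ?polyC1 ?polyC0 ?mul1r ?mul0r ?mulN1r ?addr0 // addrC.
Qed.

Lemma Theta_ab_index d (T : finPOrderType d) (z o : T) (rho : T -> nat) (n : nat) :
  Theta (ab_index z o rho n) =
  \sum_(S : {set 'I_n}) (flag_f z o rho S)%:Z *: Theta_vS S.
Proof.
rewrite /Theta; under eq_bigr do rewrite ffunE scaler_suml.
rewrite exchange_big /=; apply: eq_bigr => S _.
by rewrite -ThetaE_vS scaler_sumr; apply: eq_bigr => w _; rewrite scalerA.
Qed.

End MacMahon.

Section Chains.
Variables (d : Order.disp_t) (T : finPOrderType d).
Implicit Types (u v x y : T) (A K : {set T}).

Lemma chain_cmp A x y : is_chain A -> x \in A -> y \in A -> (x <= y)%O || (y <= x)%O.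
Proof. by move=> /forall_inP/(_ x) chA /chA/forall_inP; apply. Qed.

Lemma chain_sub A K : is_chain A -> K \subset A -> is_chain K.
Proof.
move=> chA /subsetP KA; apply/forall_inP => x xK; apply/forall_inP => y yK.
exact: chain_cmp chA (KA _ xK) (KA _ yK).
Qed.

Definition chain_in u v K : bool :=
  is_chain K && [forall x in K, (u < x)%O && (x < v)%O].

Lemma chain_in_mem u v K x : chain_in u v K -> x \in K -> (u < x)%O && (x < v)%O.
Proof. by case/andP=> _ /forall_inP; apply. Qed.

Lemma chain_in_sub u v A K : chain_in u v A -> K \subset A -> chain_in u v K.
Proof.
move=> chA KA; rewrite /chain_in (chain_sub (proj1 (andP chA)) KA).
by apply/forall_inP => x /(subsetP KA); apply: chain_in_mem.
Qed.

Lemma chain_in0 u v : chain_in u v set0.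
Proof. by apply/andP; split; apply/forall_inP => x; rewrite inE. Qed.

Lemma chain_in_closure u v K :
  (u <= v)%O -> chain_in u v K -> is_chain (u |: (v |: K)).
Proof.
move=> le_uv chK; have ltK x : x \in K -> (u < x)%O && (x < v)%O := chain_in_mem chK.
apply/forall_inP => x; rewrite !inE => xK; apply/forall_inP => y; rewrite !inE => yK.
case/or3P: xK => [/eqP->|/eqP->|xK]; case/or3P: yK => [/eqP->|/eqP->|yK];
  rewrite ?lexx ?le_uv ?orbT //;
  do ?[by case/andP: (ltK _ xK) => /ltW le1 /ltW le2; rewrite ?le1 ?le2 ?orbT
      |by case/andP: (ltK _ yK) => /ltW le1 /ltW le2; rewrite ?le1 ?le2 ?orbT].
exact: chain_cmp (proj1 (andP chK)) xK yK.
Qed.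

End Chains.

Section Graded.
Variables (d : Order.disp_t) (T : finPOrderType d) (z o : T) (rho : T -> nat).
Hypothesis graded : graded_with z o rho.
Implicit Types (u v x y : T) (K : {set T}).

Lemma rank_lt x y : (x < y)%O -> rho x < rho y.
Proof.
have [_ _ _ rank_cover] := graded.
have [s] := ubnP #|[set t | (x < t)%O && (t <= y)%O]|.
elim: s => // s IHs in x y *; rewrite ltnS => le_s lt_xy.
have [cov_xy|] := boolP (covers x y); first by rewrite (rank_cover _ _ cov_xy).
rewrite /covers lt_xy negb_forall => /existsP [t]; rewrite negbK => /andP [lt_xt lt_ty].
pose I (a b : T) := [set r | (a < r)%O && (r <= b)%O].
have I_sub a b : (x <= a)%O -> (b <= y)%O -> I a b \subset I x y.
  move=> le_xa le_by; apply/subsetP => r; rewrite !inE => /andP [lt_ar le_rb].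
  by rewrite (le_lt_trans le_xa lt_ar) (le_trans le_rb le_by).
have I_proper a b r : (x <= a)%O -> (b <= y)%O -> r \in I x y -> r \notin I a b ->
    #|I a b| < s.
  move=> le_xa le_by rI rnI; apply: leq_trans (proper_card _) le_s.
  by apply/properP; split; [apply: I_sub | exists r].
have lt_rxt : rho x < rho t.
  apply: (IHs _ _ _ lt_xt); apply: (I_proper x t y (lexx x) (ltW lt_ty)).
    by rewrite inE lt_xy /=.
  by rewrite inE lt_xy (lt_geF lt_ty).
have lt_rty : rho t < rho y.
  apply: (IHs _ _ _ lt_ty); apply: (I_proper t y t (ltW lt_xt) (lexx y)).
    by rewrite inE lt_xt; apply: ltW.
  by rewrite inE ltxx.
exact: ltn_trans lt_rxt lt_rty.
Qed.

Lemma cmp_rank_le x y : (x <= y)%O || (y <= x)%O -> rho x <= rho y -> (x <= y)%O.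
Proof.
case/orP=> // le_yx le_rxy; move: le_yx; rewrite le_eqVlt => /predU1P [->//|/rank_lt].
by rewrite ltnNge le_rxy.
Qed.

Lemma cmp_rank_lt x y : (x <= y)%O || (y <= x)%O -> rho x < rho y -> (x < y)%O.
Proof.
move=> cmp_xy lt_rxy; rewrite lt_neqAle (cmp_rank_le cmp_xy (ltnW lt_rxy)) andbT.
by apply: contraTneq lt_rxy => ->; rewrite ltnn.
Qed.

Lemma chain_rank_inj K : is_chain K -> {in K &, injective rho}.
Proof.
move=> chK x y xK yK eq_rxy; have cmp_xy := chain_cmp chK xK yK.
apply/le_anti/andP; split; apply: cmp_rank_le; rewrite ?eq_rxy //.
by rewrite orbC.
Qed.

Lemma chain_min K : is_chain K -> K != set0 ->
  {t | t \in K & forall x, x \in K -> (t <= x)%O}.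
Proof.
move=> chK /set0Pn/sigW [x0 Kx0]; case: (arg_minnP rho Kx0) => t Kt min_t.
by exists t => // x Kx; apply: cmp_rank_le (min_t x Kx); exact: chain_cmp chK Kt Kx.
Qed.

Lemma chain_in_min u t v K : (u < t)%O -> (t < v)%O ->
  [&& chain_in u v (t |: K), t \notin K & [forall x in K, (t <= x)%O]] = chain_in t v K.
Proof.
move=> lt_ut lt_tv; apply/and3P/idP => [[chtK tNK /forall_inP min_t]|chK].
  rewrite /chain_in (chain_sub (proj1 (andP chtK)) (subsetUr _ _)).
  apply/forall_inP => x xK; case/andP: (chain_in_mem chtK (setU1r t xK)) => _ ->.
  by rewrite lt_neqAle min_t // !andbT; apply: contraNneq tNK => ->.
have ltK x : x \in K -> (t < x)%O && (x < v)%O := chain_in_mem chK.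
split; last 2 first.
- by apply/negP => /ltK; rewrite ltxx.
- by apply/forall_inP => x /ltK /andP [/ltW].
apply/andP; split; last first.
  apply/forall_inP => x; rewrite !inE => /predU1P [->|/ltK /andP [lt_tx ->]];
    by rewrite ?lt_ut ?lt_tv ?(lt_trans lt_ut lt_tx).
apply: chain_sub (chain_in_closure (ltW lt_tv) chK) _.
by apply/subsetP => x; rewrite !inE => /predU1P [->|->]; rewrite ?eqxx ?orbT.
Qed.

Variable n : nat.
Hypothesis rank_top : rho o = n.+1.

Lemma rank_interior x : (z < x)%O -> (x < o)%O -> 0 < rho x <= n.
Proof.
have [_ _ rank_bot _] := graded; move=> /rank_lt lt_zx /rank_lt.
by rewrite rank_top ltnS -rank_bot lt_zx.
Qed.

Definition rank_set K : {set 'I_n} := [set i | [exists x in K, rho x == (val i).+1]].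

Lemma rank_setP K (i : 'I_n) :
  reflect (exists2 x, x \in K & rho x = (val i).+1) (i \in rank_set K).
Proof. by rewrite inE; apply: (iffP exists_inP) => -[x xK /eqP]; exists x. Qed.

Lemma card_rank_set K : chain_in z o K -> #|rank_set K| = #|K|.
Proof.
move=> chK; have [->|/set0Pn [x0 Kx0]] := eqVneq K set0.
  apply/eqP; rewrite cards0 cards_eq0; apply/eqP/setP => i.
  by rewrite !inE; apply/negbTE/exists_inP => -[x]; rewrite inE.
have rank_ok x : x \in K -> (rho x).-1 < n /\ rho x = (rho x).-1.+1.
  move=> xK; case/andP: (chain_in_mem chK xK) => /rank_interior/[apply] /andP [pos le_n].
  by rewrite prednK.
pose f x : 'I_n := insubd (Ordinal (proj1 (rank_ok x0 Kx0))) (rho x).-1.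
have f_rank x : x \in K -> (val (f x)).+1 = rho x.
  by move=> xK; have [lt_n def_r] := rank_ok x xK; rewrite val_insubd lt_n -def_r.
have -> : rank_set K = f @: K.
  apply/setP => i; apply/rank_setP/imsetP => -[x xK def_i]; exists x => //.
    by apply: val_inj; apply: succn_inj; rewrite f_rank.
  by rewrite def_i f_rank.
apply: card_in_imset => x y xK yK /(congr1 (fun i : 'I_n => (val i).+1)).
by rewrite !f_rank //; apply: (chain_rank_inj (proj1 (andP chK))).
Qed.

Lemma flag_condE K (S : {set 'I_n}) : chain_in z o K ->
  [forall x in K, exists i in S, rho x == (val i).+1] &&
  [forall i in S, exists x in K, rho x == (val i).+1] = (S == rank_set K).
Proof.
move=> chK; apply/idP/eqP => [/andP [/forall_inP rankK /forall_inP coverS]|->].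
  apply/setP => i; apply/idP/rank_setP => [/coverS/exists_inP [x xK /eqP]|[x xK rx]].
    by exists x.
  have /exists_inP [j jS /eqP] := rankK x xK.
  by rewrite rx => /succn_inj/val_inj ->.
rewrite andbC; apply/andP; split; first by apply/forall_inP => i; rewrite inE.
apply/forall_inP => x xK.
case/andP: (chain_in_mem chK xK) => /rank_interior/[apply] /andP [pos le_n].
have lt_n : (rho x).-1 < n by rewrite prednK.
apply/exists_inP; exists (Ordinal lt_n); rewrite /= ?prednK //.
by apply/rank_setP; exists x; rewrite ?prednK.
Qed.

Local Open Scope ring_scope.

Lemma Theta_chains :
  Theta (ab_index z o rho n) = \sum_(K | chain_in z o K) Theta_vS (rank_set K).
Proof.
rewrite Theta_ab_index.
transitivity (\sum_(S : {set 'I_n}) \sum_(K | chain_in z o K && (S == rank_set K))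
    Theta_vS S).
  apply: eq_bigr => S _; rewrite /flag_f -natz scaler_nat -sumr_const.
  apply: eq_bigl => K; rewrite inE andbA -/(chain_in z o K).
  by case chK: (chain_in z o K); rewrite // flag_condE.
rewrite (exchange_big_dep (chain_in z o)) => [|S K _ /andP []//].
apply: eq_bigr => K chK; rewrite (big_pred1 (rank_set K)) // => S.
by rewrite chK.
Qed.

Definition chainsum u v : rat := \sum_(K | chain_in u v K) (- 2^-1) ^+ #|K|.

(* Split off the empty chain and classify the others by their least element. *)
Lemma chainsumE u v :
  chainsum u v = 1 - 2^-1 * \sum_(t | (u < t)%O && (t < v)%O) chainsum t v.
Proof.
rewrite /chainsum (bigD1 set0) ?chain_in0 //= cards0 expr0; congr (_ + _).
transitivity (\sum_(K | chain_in u v K && (K != set0))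
    \sum_(t | (t \in K) && [forall x in K, (t <= x)%O]) (- 2^-1 : rat) ^+ #|K|).
  apply: eq_bigr => K /andP [chK K0].
  have [t0 Kt0 min_t0] := chain_min (proj1 (andP chK)) K0.
  rewrite (big_pred1 t0) // => t; apply/andP/eqP => [[Kt /forall_inP min_t]|->].
    by apply: le_anti; rewrite min_t0 ?min_t.
  by split=> //; apply/forall_inP.
rewrite (exchange_big_dep (fun t => (u < t)%O && (t < v)%O)) /=; last first.
  by move=> K t /andP [chK _] /andP [Kt _]; apply: chain_in_mem chK Kt.
rewrite mulr_sumr -sumrN; apply: eq_bigr => t /andP [lt_ut lt_tv].
rewrite (reindex_onto (fun K => t |: K) (fun K => K :\ t)) /=; last first.
  by move=> K /andP [_ /andP [Kt _]]; rewrite setD1K.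
rewrite -mulNr mulr_sumr; apply: eq_big => [K|K chK].
  rewrite -(chain_in_min K lt_ut lt_tv) setU11 /=.
  have -> : (t |: K != set0) by apply/set0Pn; exists t; rewrite setU11.
  have -> : [forall x in t |: K, (t <= x)%O] = [forall x in K, (t <= x)%O].
    apply/forall_inP/forall_inP => min_t x; first by move=> xK; apply/min_t/setU1r.
    by case/setU1P => [->|/min_t].
  have -> : ((t |: K) :\ t == K) = (t \notin K).
    by apply/eqP/idP => [<-|/setU1K //]; rewrite setD11.
  by rewrite andbT -andbA [_ && (_ \notin _)]andbC.
have tNK : t \notin K by case/andP: chK => _ /eqP <-; rewrite setD11.
by rewrite cardsU1 tNK exprS.
Qed.

Lemma chainsum_rec u v :
  2 * chainsum u v + \sum_(t | (u < t)%O && (t < v)%O) chainsum t v = 2.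
Proof. by rewrite chainsumE mulrBr mulr1 mulrA divff ?mul1r ?subrK. Qed.

Lemma chainsum_unique v (Y : T -> rat) :
  (forall w, (w < v)%O -> 2 * Y w + \sum_(t | (w < t)%O && (t < v)%O) Y t = 2) ->
  forall w, (w < v)%O -> Y w = chainsum w v.
Proof.
move=> recY w; have [s] := ubnP #|[set t | (w < t)%O]|.
elim: s => // s IHs in w *; rewrite ltnS => le_s lt_wv.
have eq_sum : \sum_(t | (w < t)%O && (t < v)%O) Y t =
              \sum_(t | (w < t)%O && (t < v)%O) chainsum t v.
  apply: eq_bigr => t /andP [lt_wt lt_tv]; apply: IHs lt_tv.
  apply: leq_trans (proper_card _) le_s; apply/properP; split.
    by apply/subsetP => r; rewrite !inE; apply: lt_trans.
  by exists t; rewrite !inE ?ltxx.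
apply: (mulfI (_ : 2 != 0)); first by rewrite pnatr_eq0.
by apply: (addIr (\sum_(t | (w < t)%O && (t < v)%O) chainsum t v));
  rewrite chainsum_rec -eq_sum recY.
Qed.

Hypothesis euler : eulerian rho.

Definition sgn x : rat := (-1) ^+ rho x.

Lemma sum_sgn_Icc u v : (u < v)%O -> \sum_(w | (u <= w)%O && (w <= v)%O) sgn w = 0.
Proof.
move=> lt_uv; have := euler lt_uv; rewrite !cardsE => balanced.
rewrite (bigID (fun w => odd (rho w))) /=.
rewrite (eq_bigr (fun=> -1)) => [|w /andP [_ odd_w]]; last by rewrite /sgn -signr_odd odd_w.
rewrite [X in _ + X](eq_bigr (fun=> 1)) => [|w /andP [_ /negbTE ev_w]]; last first.
  by rewrite /sgn -signr_odd ev_w.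
by rewrite !sumr_const balanced mulNrn addNr.
Qed.

Lemma sum_sgn_Ico u v : (u < v)%O -> \sum_(w | (u <= w)%O && (w < v)%O) sgn w = - sgn v.
Proof.
move=> lt_uv; have := sum_sgn_Icc lt_uv.
rewrite (bigD1 v) /= ?lexx ?(ltW lt_uv) // => /eqP; rewrite addrC addr_eq0 => /eqP <-.
by apply: eq_bigl => w; rewrite lt_neqAle [(w != v) && _]andbC andbA.
Qed.

(* Weight the recursion at each w in [u, v) by sgn w and sum it up. *)
Lemma chainsum_sgn_rec u v : (u < v)%O ->
  2 * sgn u * chainsum u v + \sum_(t | (u < t)%O && (t < v)%O) sgn t * chainsum t v
  = - (2 * sgn v).
Proof.
move=> lt_uv.
have sum_rec : \sum_(w | (u <= w)%O && (w < v)%O)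
    sgn w * (2 * chainsum w v + \sum_(t | (w < t)%O && (t < v)%O) chainsum t v)
    = - (2 * sgn v).
  under eq_bigr do rewrite chainsum_rec.
  by rewrite -mulr_suml sum_sgn_Ico // mulNr mulrC.
have inner : \sum_(w | (u <= w)%O && (w < v)%O)
    sgn w * \sum_(t | (w < t)%O && (t < v)%O) chainsum t v =
    - \sum_(t | (u < t)%O && (t < v)%O) sgn t * chainsum t v.
  under eq_bigr do rewrite mulr_sumr.
  rewrite (exchange_big_dep (fun t => (u < t)%O && (t < v)%O)) /=; last first.
    by move=> w t /andP [le_uw _] /andP [lt_wt ->]; rewrite (le_lt_trans le_uw lt_wt).
  rewrite -sumrN; apply: eq_bigr => t /andP [lt_ut lt_tv].
  rewrite -mulr_suml -mulNr -(sum_sgn_Ico lt_ut); congr (_ * _); apply: eq_bigl => w.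
  rewrite lt_tv andbT -andbA; case lt_wt: (w < t)%O; rewrite ?andbF //.
  by rewrite (lt_trans lt_wt lt_tv).
rewrite -sum_rec; under [RHS]eq_bigr do rewrite mulrDr; rewrite big_split /= inner.
rewrite [X in _ = X + _](bigD1 u) /=; last by rewrite lexx.
have -> : \sum_(w | ((u <= w)%O && (w < v)%O) && (w != u)) sgn w * (2 * chainsum w v) =
          2 * \sum_(t | (u < t)%O && (t < v)%O) sgn t * chainsum t v.
  rewrite mulr_sumr; apply: eq_big => [w|w _]; last by rewrite mulrCA.
  by rewrite [(u < w)%O]lt_neqAle andbAC eq_sym [(u != w) && _]andbC.
ring.
Qed.

Lemma chainsum_sgn u v : (u < v)%O -> chainsum u v = - (sgn u * sgn v) * chainsum u v.
Proof.
move=> lt_uv; have sgn_sq x : sgn x * sgn x = 1.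
  by rewrite -exprD -signr_odd addnn odd_double.
symmetry; apply: (chainsum_unique (Y := fun w => - (sgn w * sgn v) * chainsum w v)) lt_uv.
move=> w lt_wv; transitivity (- sgn v * (2 * sgn w * chainsum w v +
    \sum_(t | (w < t)%O && (t < v)%O) sgn t * chainsum t v)).
  rewrite mulrDr; congr (_ + _); first ring.
  by rewrite mulr_sumr; apply: eq_bigr => t _; ring.
rewrite chainsum_sgn_rec //; transitivity (2 * (sgn v * sgn v)); first ring.
by rewrite sgn_sq mulr1.
Qed.

Lemma chainsum_even_eq0 u v : (u < v)%O -> ~~ odd (rho u + rho v) -> chainsum u v = 0.
Proof.
move=> lt_uv even_uv; have := chainsum_sgn lt_uv.
rewrite /sgn -exprD -signr_odd (negbTE even_uv) expr0 mulN1r => /eqP.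
by rewrite -addr_eq0 -mulr2n mulrn_eq0 => /eqP.
Qed.

Definition basis_poly (J : {set 'I_n}) : {poly rat} :=
  \prod_(i < n) (if i \in J then 1 + 'X^((val i).+1) else 1 - 'X^((val i).+1)).

(* The coordinates of [Theta_vS R] in the basis [basis_poly], obtained from
   X^k = ((1 + X^k) - (1 - X^k)) / 2 factor by factor. *)
Definition basis_coef (J R : {set 'I_n}) : rat :=
  \prod_(i < n) (if i \in J then (if i \in R then 2^-1 else 0)
                 else (if i \in R then - 2^-1 else 1)).

Lemma Theta_vS_basis (R : {set 'I_n}) :
  map_poly intr (Theta_vS R) = \sum_(J : {set 'I_n}) basis_coef J R *: basis_poly J.
Proof.
rewrite rmorph_prod; transitivity (\prod_(i < n)
   ((if i \in R then 2^-1 else 0) *: (1 + 'X^((val i).+1)) +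
    (if i \in R then - 2^-1 else 1) *: (1 - 'X^((val i).+1)) : {poly rat})).
  apply: eq_bigr => i _; rewrite fun_if rmorphB rmorph1 rmorphXn /= map_polyX.
  case: (i \in R); last by rewrite scale0r add0r scale1r.
  rewrite scaleNr -scalerBr opprB addrC addrA subrK -mulr2n -scalerMnr scalerMnl.
  by rewrite -mulr_natr mulVf ?pnatr_eq0 // scale1r.
rewrite bigA_distr; apply: eq_bigr => J _.
by rewrite -scaler_prod; apply: eq_bigr => i _; case: (i \in J).
Qed.

Definition chain_coef (J : {set 'I_n}) : rat :=
  \sum_(K | chain_in z o K) basis_coef J (rank_set K).

Lemma Theta_basis :
  map_poly intr (Theta (ab_index z o rho n)) =
  \sum_(J : {set 'I_n}) chain_coef J *: basis_poly J.
Proof.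
rewrite Theta_chains rmorph_sum /=; under eq_bigr do rewrite Theta_vS_basis.
by rewrite exchange_big /=; apply: eq_bigr => J _; rewrite scaler_suml.
Qed.

Definition marks (J : {set 'I_n}) : pred nat :=
  fun k => [|| k == 0, k == n.+1 | [exists i in J, (val i).+1 == k]].

Lemma basis_poly_marked (J : {set 'I_n}) :
  basis_poly J = marked_prod (marks J) 0 n.+1.
Proof.
rewrite /marked_prod big_add1 /= big_mkord; apply: eq_bigr => i _.
suff -> : marks J (val i).+1 = (i \in J) by [].
rewrite /marks /= eqSS (ltn_eqF (ltn_ord i)) /=.
by apply/exists_inP/idP => [[j jJ /eqP/succn_inj/val_inj <-]|iJ] //; exists i.
Qed.

Lemma dvdp_basis_poly (J : {set 'I_n}) :
  odd_gaps (marks J) n.+1 -> (1 + 'X) ^+ (n.+1)./2 %| basis_poly J.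
Proof.
move=> gapsJ; have := dvdp_marked_prod rat gapsJ (leqnn n.+1 : (0 < n.+1 <= n.+1)%N).
by rewrite subn0 -basis_poly_marked; apply; rewrite /marks eqxx ?orbT.
Qed.

Lemma rank_setI_rank (p : pred nat) K (i : 'I_n) :
  (i \in rank_set (K :&: [set t | p (rho t)])) = p (val i).+1 && (i \in rank_set K).
Proof.
apply/rank_setP/andP => [[x /setIP [xK]]|[pi /rank_setP [x xK rx]]].
  by rewrite inE => px rx; rewrite -rx; split => //; apply/rank_setP; exists x.
by exists x; rewrite // inE xK inE rx.
Qed.

Definition band (a b : nat) : {set T} := [set t | (a < rho t < b)%N].

Lemma basis_coef_split (J : {set 'I_n}) a b K :
  (forall i, i \in J -> ~~ (a < (val i).+1 < b)%N) ->
  basis_coef J (rank_set K) =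
  basis_coef J (rank_set (K :\: band a b)) * (- 2^-1) ^+ #|rank_set (K :&: band a b)|.
Proof.
move=> outJ; have -> : K :\: band a b = K :&: [set t | ~~ (a < rho t < b)%N].
  by apply/setP => x; rewrite !inE andbC.
rewrite -prodr_const big_mkcond /basis_coef -big_split /=; apply: eq_bigr => i _.
rewrite /band (rank_setI_rank (fun k => a < k < b)%N).
rewrite (rank_setI_rank (fun k => ~~ (a < k < b)%N)).
case: (boolP (a < (val i).+1 < b)%N) => [inB|_] /=.
  by rewrite (negbTE (contraL (outJ i) inB)) mul1r.
by rewrite mulr1.
Qed.

Lemma basis_coef_subset (J R : {set 'I_n}) : basis_coef J R != 0 -> J \subset R.
Proof.
apply: contraR => /subsetPn [i iJ iNR].
by rewrite /basis_coef (bigD1 i) //= iJ (negbTE iNR) mul0r.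
Qed.

Lemma marks_rank (J : {set 'I_n}) K k :
  J \subset rank_set K -> marks J k -> exists2 u, u \in z |: (o |: K) & rho u = k.
Proof.
have [_ _ rank_bot _] := graded.
move=> JK /or3P [/eqP->|/eqP->|/exists_inP [i iJ /eqP <-]].
- by exists z; rewrite ?setU11.
- by exists o; rewrite // !inE eqxx orbT.
have /rank_setP [x xK rx] := subsetP JK i iJ.
by exists x; rewrite // !inE xK !orbT.
Qed.

Section Band.
Variables (C : {set T}) (a b : nat) (u v : T).
Hypotheses (chC : chain_in z o C) (C_band : C :&: band a b = set0).
Hypotheses (uC : u \in z |: (o |: C)) (vC : v \in z |: (o |: C)).
Hypotheses (ru : rho u = a) (rv : rho v = b).

Let le_zo : (z <= o)%O. Proof. by case: graded. Qed.

Let notin_band x : x \in C -> x \notin band a b.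
Proof.
move=> xC; apply/negP => xB; have : x \in C :&: band a b by apply/setIP.
by rewrite C_band inE.
Qed.

(* Elements of [C] lie below [u] or above [v], according to their rank. *)
Lemma band_cmp y x : y \in C -> (u < x)%O -> (x < v)%O -> (y <= x)%O || (x <= y)%O.
Proof.
move=> yC lt_ux lt_xv; have closed_C := chain_in_closure le_zo chC.
have yC' : y \in z |: (o |: C) by rewrite !inE yC !orbT.
case: (leqP (rho y) a) => [le_ya|lt_ay].
  have le_yu : (y <= u)%O by apply: cmp_rank_le; rewrite ?ru // (chain_cmp closed_C).
  by rewrite (le_trans le_yu (ltW lt_ux)).
have le_vy : (v <= y)%O.
  apply: cmp_rank_le; rewrite ?(chain_cmp closed_C) // rv leqNgt.
  by move: (notin_band yC); rewrite inE lt_ay.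
by rewrite (le_trans (ltW lt_xv) le_vy) orbT.
Qed.

Lemma chain_in_band L :
  chain_in z o (C :|: L) && (L \subset band a b) = chain_in u v L.
Proof.
apply/idP/idP => [/andP [chCL /subsetP LB]|chL].
  have closed_CL := chain_in_closure le_zo chCL.
  have sub_CL : z |: (o |: C) \subset z |: (o |: (C :|: L)).
    by rewrite !setUS // subsetUl.
  apply/andP; split; first exact: chain_sub (proj1 (andP chCL)) (subsetUr _ _).
  apply/forall_inP => x xL; have := LB x xL; rewrite inE -ru -rv => /andP [lt_ux lt_xv].
  have xCL : x \in z |: (o |: (C :|: L)) by rewrite !inE xL !orbT.
  by rewrite !cmp_rank_lt // ?(chain_cmp closed_CL xCL) ?(chain_cmp closed_CL _ xCL)
    ?(subsetP sub_CL).
have [le_z le_o _ _] := graded.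
have ltL x : x \in L -> (u < x)%O && (x < v)%O := chain_in_mem chL.
have -> : L \subset band a b.
  apply/subsetP => x /ltL /andP [/rank_lt lt_ux /rank_lt lt_xv].
  by rewrite inE -ru -rv lt_ux.
rewrite andbT; apply/andP; split.
  apply/forall_inP => x /setUP [xC|xL]; apply/forall_inP => y /setUP [yC|yL].
  - exact: chain_cmp (proj1 (andP chC)) xC yC.
  - by case/andP: (ltL y yL); apply: band_cmp.
  - by rewrite orbC; case/andP: (ltL x xL); apply: band_cmp.
  - exact: chain_cmp (proj1 (andP chL)) xL yL.
apply/forall_inP => x /setUP [/(chain_in_mem chC) //|/ltL /andP [lt_ux lt_xv]].
by rewrite (le_lt_trans (le_z u) lt_ux) (lt_le_trans lt_xv (le_o v)).
Qed.

Lemma band_fiber_sum :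
  \sum_(K | chain_in z o K && (K :\: band a b == C))
     (- 2^-1) ^+ #|rank_set (K :&: band a b)| = chainsum u v.
Proof.
rewrite (reindex_onto (fun L => C :|: L) (fun K => K :&: band a b)) /=; last first.
  by move=> K /andP [_ /eqP <-]; rewrite setUC setID.
have UI L : (C :|: L) :&: band a b = L :&: band a b by rewrite setIUl C_band set0U.
apply: eq_big => [L|L /andP [/andP [chCL _] /eqP defL]]; last first.
  by rewrite defL card_rank_set //; apply: chain_in_sub chCL (subsetUr _ _).
rewrite UI -chain_in_band; have [LB|LNB] := boolP (L \subset band a b).
  have -> : (C :|: L) :\: band a b = C.
    apply/setP => x; rewrite in_setD in_setU.
    case: (boolP (x \in band a b)) => /= [xB|xNB].
      by apply/esym/negP => /notin_band; rewrite xB.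
    by rewrite (contraNF (subsetP LB x) xNB) orbF.
  by rewrite (setIidPl LB) !eqxx !andbT.
rewrite andbF; apply/negbTE; apply: contra LNB => /andP [_ /eqP <-].
exact: subsetIr.
Qed.

End Band.

Lemma chain_coef_eq0 (J : {set 'I_n}) a b :
  (a < b <= n.+1)%N -> marks J a -> marks J b ->
  (forall k, (a < k < b)%N -> ~~ marks J k) -> ~~ odd (b - a) -> chain_coef J = 0.
Proof.
move=> /andP [lt_ab _] mark_a mark_b gap even_gap.
have outJ i : i \in J -> ~~ (a < (val i).+1 < b)%N.
  move=> iJ; apply/negP => /gap/negP; apply; apply/or3P/Or33/exists_inP.
  by exists i.
rewrite /chain_coef (eq_bigr _ (fun K _ => basis_coef_split K outJ)).
rewrite (partition_big (fun K => K :\: band a b) predT) //=; apply: big1 => C _.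
rewrite (eq_bigr (fun K => basis_coef J (rank_set C) *
    (- 2^-1) ^+ #|rank_set (K :&: band a b)|)) => [|K /andP [_ /eqP ->] //].
rewrite -mulr_sumr; have [->|nzC] := eqVneq (basis_coef J (rank_set C)) 0.
  by rewrite mul0r.
have [K0 /andP [chK0 /eqP defC]|none] :=
  pickP (fun K => chain_in z o K && (K :\: band a b == C)); last first.
  by rewrite big_pred0 ?mulr0.
have chC : chain_in z o C by rewrite -defC; apply: chain_in_sub chK0 (subsetDl _ _).
have C_band : C :&: band a b = set0.
  by rewrite -defC setDE -setIA [~: _ :&: _]setIC setICr setI0.
have JC := basis_coef_subset nzC.
have [u uC ru] := marks_rank JC mark_a; have [v vC rv] := marks_rank JC mark_b.
rewrite (band_fiber_sum chC C_band uC vC ru rv) chainsum_even_eq0 ?mulr0 //.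
  apply: cmp_rank_lt; last by rewrite ru rv.
  by apply: chain_cmp (chain_in_closure _ chC) uC vC; case: graded.
by rewrite ru rv oddD addbC -oddB // ltnW.
Qed.

End Graded.

Theorem mainTheorem5 (d : Order.disp_t) (T : finPOrderType d) (z o : T)
  (rho : T -> nat) (n : nat) :
  graded_with z o rho -> rho o = n.+1 -> eulerian rho ->
  exists r : {poly int},
    Theta (ab_index z o rho n) = (r * (1 + 'X) ^+ (n.+1)./2)%R.
Proof.
move=> graded rank_top euler; apply: dvdp_intr_monic.
  by rewrite monic_exp // addrC -[1%R]polyC1 monicXaddC.
rewrite rmorphXn rmorphD rmorph1 /= map_polyX (Theta_basis graded rank_top).
elim/big_rec: _ => [|J p _ dvd_p]; first exact: dvdp0.
apply: dvdp_add dvd_p.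
have [gapsJ|/not_odd_gaps [a [b [abN mark_a mark_b gap even_gap]]]] :=
  classic (odd_gaps (marks J) n.+1).
  by rewrite -mul_polyC dvdp_mull // dvdp_basis_poly.
have := chain_coef_eq0 graded rank_top euler abN mark_a mark_b gap even_gap.
by move=> ->; rewrite scale0r dvdp0.
Qed.
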